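(* Let $L$ be a bounded lattice and $\otimes$ a t-norm on $L$ that is both $\wedge$-distributive and $\vee$-distributive and such that $\langle L,\otimes\rangle$ is divisible. Let $k_1,k_2\in\mathbb{N}^*$ and let $F_1,F_2:L^2\to L$ be such that, for $i=1,2$, $F_i$ is $\otimes^{k_i}$-homogeneous, has $1_L$ as neutral element and satisfies $F_i(x,y)=F_i(x\wedge y,x\vee y)$ for all $x,y\in L$. If $k_1\ge k_2$, then $F_1(x,y)\le_LF_2(x,y)$ for all $x,y\in L$.
   Context: A t-norm on $L$ is a commutative, associative map $L^2\to L$, non-decreasing in each argument, with neutral element $1_L$; $\wedge$-distributive: $x\otimes(y\wedge z)=(x\otimes y)\wedge(x\otimes z)$; $\vee$-distributive: $x\otimes(y\vee z)=(x\otimes y)\vee(x\otimes z)$. $\langle L,\otimes\rangle$ is divisible if for all $y\le_Lx$ there is $z$ with $y=x\otimes z$. Powers: $\lambda_\otimes^{(0)}=1_L$, $\lambda_\otimes^{(1)}=\lambda$, $\lambda_\otimes^{(m)}=\lambda\otimes\lambda_\otimes^{(m-1)}$ for $m\ge2$. $F$ is $\otimes^k$-homogeneous if $F(\lambda\otimes x,\lambda\otimes y)=\lambda_\otimes^{(k)}\otimes F(x,y)$ for all $\lambda,x,y$. $1_L$ is neutral for $F$ if $F(x,1_L)=F(1_L,x)=x$ for all $x$. *)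

From HB Require Import structures.
From mathcomp Require Import all_boot all_order.
Set Implicit Arguments. Unset Strict Implicit. Unset Printing Implicit Defensive.
Import Order.TTheory.
Local Open Scope order_scope.

Definition is_tnorm d (L : tbLatticeType d) (op : L -> L -> L) : Prop :=
  [/\ (forall x y, op x y = op y x),
      (forall x y z, op x (op y z) = op (op x y) z),
      (forall x y z, y <= z -> op x y <= op x z),
      (forall x y z, x <= y -> op x z <= op y z)
    & (forall x, op x \top = x /\ op \top x = x)].

Definition meet_distributive d (L : tbLatticeType d) (op : L -> L -> L) : Prop :=
  forall x y z, op x (y `&` z) = (op x y) `&` (op x z).

Definition join_distributive d (L : tbLatticeType d) (op : L -> L -> L) : Prop :=
  forall x y z, op x (y `|` z) = (op x y) `|` (op x z).

Definition divisible d (L : tbLatticeType d) (op : L -> L -> L) : Prop :=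
  forall x y : L, y <= x -> exists z, y = op x z.

Fixpoint tpow d (L : tbLatticeType d) (op : L -> L -> L) (l : L) (m : nat) : L :=
  match m with
  | 0 => \top
  | 1 => l
  | S m' => op l (tpow op l m')
  end.

Definition homogeneous d (L : tbLatticeType d) (op : L -> L -> L) (k : nat)
  (F : L -> L -> L) : Prop :=
  forall l x y, F (op l x) (op l y) = op (tpow op l k) (F x y).

Definition top_neutral d (L : tbLatticeType d) (F : L -> L -> L) : Prop :=
  forall x, F x \top = x /\ F \top x = x.

From HB Require Import structures.
From mathcomp Require Import all_boot all_order.
Set Implicit Arguments. Unset Strict Implicit. Unset Printing Implicit Defensive.
Import Order.TTheory.
Local Open Scope order_scope.

(* Fix x, y and put a := x `|` y.  Since x `&` y <= a,
   divisibility gives z with x `&` y = a (x) z, and trivially a = a (x) 1_L.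
   For any F that is (x)^k-homogeneous, has 1_L as neutral element and only
   depends on (x `&` y, x `|` y), this yields the closed form
       F x y = F (a (x) z) (a (x) 1_L) = a^(k) (x) F z 1_L = a^(k) (x) z.
   The theorem then reduces to a^(k1) <= a^(k2), i.e. to the fact that the
   t-norm powers of an element decrease with the exponent, followed by
   monotonicity of (x) in its first argument. *)

Section TnormPowers.
Variables (d : Order.disp_t) (L : tbLatticeType d) (op : L -> L -> L).
Hypothesis Hop : is_tnorm op.

(* One more factor can only decrease a power, as l (x) u <= 1_L (x) u = u. *)
Lemma tpowS_le (l : L) (m : nat) : tpow op l m.+1 <= tpow op l m.
Proof.
case: Hop => _ _ _ op_monol op_neutral.
case: m => [|m] /=; first exact: lex1.
by apply: le_trans (op_monol _ _ _ (lex1 l)) _; rewrite (proj2 (op_neutral _)).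
Qed.

Lemma tpow_anti (l : L) (m n : nat) : (n <= m)%N -> tpow op l m <= tpow op l n.
Proof.
move=> /subnK <-; elim: (m - n)%N => [|i IHi]; first exact: lexx.
by rewrite addSn; apply: le_trans (tpowS_le _ _) IHi.
Qed.

Lemma homogeneous_closed_form (k : nat) (F : L -> L -> L)
  (Fhom : homogeneous op k F) (Fneutral : top_neutral F)
  (Fmeetjoin : forall x y, F x y = F (x `&` y) (x `|` y)) (x y z : L) :
  x `&` y = op (x `|` y) z -> F x y = op (tpow op (x `|` y) k) z.
Proof.
move=> meet_eq.
have join_eq : x `|` y = op (x `|` y) \top.
  by case: Hop => _ _ _ _ op_neutral; rewrite (proj1 (op_neutral _)).
by rewrite Fmeetjoin meet_eq {2}join_eq Fhom (proj1 (Fneutral z)).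
Qed.

End TnormPowers.

Theorem mainTheorem13 (d : Order.disp_t) (L : tbLatticeType d) (op : L -> L -> L)
  (Hop : is_tnorm op) (Hmeet : meet_distributive op) (Hjoin : join_distributive op)
  (Hdiv : divisible op) (k1 k2 : nat) (Hk1 : (0 < k1)%N) (Hk2 : (0 < k2)%N)
  (F1 F2 : L -> L -> L)
  (H1h : homogeneous op k1 F1) (H1n : top_neutral F1)
  (H1s : forall x y, F1 x y = F1 (x `&` y) (x `|` y))
  (H2h : homogeneous op k2 F2) (H2n : top_neutral F2)
  (H2s : forall x y, F2 x y = F2 (x `&` y) (x `|` y))
  (Hk : (k2 <= k1)%N) :
  forall x y, F1 x y <= F2 x y.
Proof.
move=> x y.
have meet_le_join : x `&` y <= x `|` y by apply: le_trans (leIl x y) (leUl x y).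
have [z meet_eq] := Hdiv _ _ meet_le_join.
rewrite (homogeneous_closed_form Hop H1h H1n H1s meet_eq).
rewrite (homogeneous_closed_form Hop H2h H2n H2s meet_eq).
have [_ _ _ op_monol _] := Hop.
exact/op_monol/(tpow_anti Hop).
Qed.
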